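(* The category of finite dimensional rational $\mathbb G_a$-modules over $k$ is wild.
   Context: $k$ is an algebraically closed field of characteristic $p>0$, $\mathbb G_a$ is the additive group over $k$, and a rational $\mathbb G_a$-module is a comodule for $k[\mathbb G_a]=k[T]$. *)

From HB Require Import structures.
From mathcomp Require Import all_boot all_order all_algebra.
Unset Printing Implicit Defensive.
Import GRing.Theory.
Local Open Scope ring_scope.

Section GaWild.
Variable k : closedFieldType.

(* ---------- finite dimensional rational G_a-modules ----------
   A finite dimensional comodule for k[G_a] = k[T] (Delta T = T(x)1 + 1(x)T,
   counit T |-> 0) on k^n, written in a basis, is a matrix
   rho(T) in M_n(k[T]) (row-vector convention v |-> v *m rho(T)) with
     counit axiom:  rho(0) = 1
     coassociativity:  rho(s + t) = rho(s) * rho(t)  in M_n(k[s,t]).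
   In {poly {poly k}} the outer variable 'X is t and ('X)%:P is s. *)
Record gaMod := GaMod { gdim : nat; grho : 'M[{poly k}]_gdim }.

Definition is_comodule (V : gaMod) : Prop :=
  map_mx (fun q : {poly k} => q.[0]) (grho V) = 1%:M /\
  map_mx (fun q : {poly k} => (q ^:P) \Po ('X + ('X)%:P)) (grho V)
    = map_mx polyC (grho V) *m map_mx (map_poly polyC) (grho V).

Definition ga_hom (V W : gaMod) (f : 'M[k]_(gdim V, gdim W)) : bool :=
  grho V *m map_mx polyC f == map_mx polyC f *m grho W.

Definition ga_indec (V : gaMod) : Prop :=
  (0 < gdim V)%N /\
  forall e : 'M[k]_(gdim V), ga_hom V V e -> e *m e = e -> e = 0 \/ e = 1%:M.

Definition ga_iso (V W : gaMod) : Prop :=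
  exists (f : 'M[k]_(gdim V, gdim W)) (g : 'M[k]_(gdim W, gdim V)),
    [/\ ga_hom V W f, ga_hom W V g, f *m g = 1%:M & g *m f = 1%:M].

Record kxyMod := KxyMod { kdim : nat; kx : 'M[k]_kdim; ky : 'M[k]_kdim }.

Definition kxy_hom (M N : kxyMod) (f : 'M[k]_(kdim M, kdim N)) : bool :=
  (kx M *m f == f *m kx N) && (ky M *m f == f *m ky N).

Definition kxy_indec (M : kxyMod) : Prop :=
  (0 < kdim M)%N /\
  forall e : 'M[k]_(kdim M), kxy_hom M M e -> e *m e = e -> e = 0 \/ e = 1%:M.

Definition kxy_iso (M N : kxyMod) : Prop :=
  exists (f : 'M[k]_(kdim M, kdim N)) (g : 'M[k]_(kdim N, kdim M)),
    [/\ kxy_hom M N f, kxy_hom N M g, f *m g = 1%:M & g *m f = 1%:M].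

Definition short_exact l m n (f : 'M[k]_(l, m)) (g : 'M[k]_(m, n)) : bool :=
  [&& row_free f, row_full g, f *m g == 0 & (\rank f + \rank g == m)%N].

Record rep_embedding := RepEmbedding {
  Fobj : kxyMod -> gaMod;
  Fmor : forall M N : kxyMod,
           'M[k]_(kdim M, kdim N) -> 'M[k]_(gdim (Fobj M), gdim (Fobj N));
  Fobj_comod : forall M, is_comodule (Fobj M);
  Fmor_hom : forall M N f, kxy_hom M N f -> ga_hom (Fobj M) (Fobj N) (Fmor M N f);
  Fmor_id : forall M, Fmor M M 1%:M = 1%:M;
  Fmor_comp : forall L M N (f : 'M[k]_(kdim L, kdim M)) (g : 'M[k]_(kdim M, kdim N)),
      kxy_hom L M f -> kxy_hom M N g -> Fmor L N (f *m g) = Fmor L M f *m Fmor M N g;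
  Fmor_linear : forall M N (a : k) (f g : 'M[k]_(kdim M, kdim N)),
      kxy_hom M N f -> kxy_hom M N g -> Fmor M N (a *: f + g) = a *: Fmor M N f + Fmor M N g;
  Fmor_exact : forall L M N (f : 'M[k]_(kdim L, kdim M)) (g : 'M[k]_(kdim M, kdim N)),
      kxy_hom L M f -> kxy_hom M N g -> short_exact _ _ _ f g -> short_exact _ _ _ (Fmor L M f) (Fmor M N g);
  Fobj_indec : forall M, kxy_indec M -> ga_indec (Fobj M);
  Fobj_iso_refl : forall M N, ga_iso (Fobj M) (Fobj N) -> kxy_iso M N
}.

Definition Ga_modules_wild : Prop := inhabited rep_embedding.

End GaWild.

(* Let N(U) = [[0, U], [0, 0]].  For a k<x,y>-module (x, y) on k^n, the matrices
   A = N(1), B = N(x), D = N(y) on k^2n multiply pairwise to zero, so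
   rho(T) = 1 + T A + T^p B + T^(p^2) D is a comodule: rho(s) rho(t) collapses to
   1 + (s + t) A + (s^p + t^p) B + (s^(p^2) + t^(p^2)) D, which is rho(s + t) by
   additivity of Frobenius.  Since 1, p and p^2 are distinct exponents, a
   comodule map between two such modules is a matrix commuting with A, B and D;
   commuting with N(1) forces the shape [[P, Q], [0, P]] and commuting with N(x),
   N(y) says that P is a k<x,y>-map.  Hence M |-> k^2n, f |-> diag(f, f) is a
   representation embedding. *)
From HB Require Import structures.
From mathcomp Require Import all_boot all_order all_algebra.
Set Implicit Arguments.
Unset Strict Implicit.
Unset Printing Implicit Defensive.

Import GRing.Theory.
Local Open Scope ring_scope.

Lemma mulmx_unipotent3 (R : comNzRingType) n (a b d : 'M[R]_n) (s1 s2 s3 t1 t2 t3 : R) :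
  {in [:: a; b; d] &, forall U V, U *m V = 0} ->
  (1%:M + s1 *: a + s2 *: b + s3 *: d) *m (1%:M + t1 *: a + t2 *: b + t3 *: d)
  = 1%:M + (s1 + t1) *: a + (s2 + t2) *: b + (s3 + t3) *: d.
Proof.
move=> nil; rewrite !mulmxDl !mulmxDr !mul1mx !mulmx1 -!scalemxAl -!scalemxAr.
rewrite !nil ?inE ?eqxx ?orbT // !scaler0 !addr0 !scalerDl !addrA.
by rewrite (ACl (1*5*2*6*3*7*4)%AC).
Qed.

Lemma map_coefp_mulmxC (R : nzRingType) c m n l
    (M : 'M[{poly R}]_(m, n)) (f : 'M[R]_(n, l)) :
  map_mx (coefp c) (M *m map_mx polyC f) = map_mx (coefp c) M *m f.
Proof.
apply/matrixP=> i j; rewrite !mxE raddf_sum; apply: eq_bigr => r _.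
by rewrite !mxE /= coefMC.
Qed.

Lemma map_coefp_mulCmx (R : nzRingType) c m n l
    (f : 'M[R]_(m, n)) (M : 'M[{poly R}]_(n, l)) :
  map_mx (coefp c) (map_mx polyC f *m M) = f *m map_mx (coefp c) M.
Proof.
apply/matrixP=> i j; rewrite !mxE raddf_sum; apply: eq_bigr => r _.
by rewrite !mxE /= coefCM.
Qed.

Section FrobeniusComodule.
Variables (k : closedFieldType) (p : nat).
Hypothesis p_char : p \in [pchar k].

Lemma p_gt1 : (1 < p)%N.
Proof. exact/prime_gt1/(pcharf_prime p_char). Qed.

Definition frob_rho n (A B D : 'M[k]_n) : 'M[{poly k}]_n :=
  1%:M + 'X *: map_mx polyC A + 'X^p *: map_mx polyC B
    + 'X^(p * p)%N *: map_mx polyC D.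

Lemma coefmx_frob_rho c n (A B D : 'M[k]_n) :
  map_mx (coefp c) (frob_rho A B D) = (c == 0)%:R *: 1%:M + (c == 1)%:R *: A
    + (c == p)%:R *: B + (c == p * p)%N%:R *: D.
Proof.
apply/matrixP=> i j; rewrite !mxE /= !coefD !coefMC coefX !coefXn coefMn coef1.
by rewrite mulr_natr.
Qed.

Lemma frob_rho_coefs n (A B D : 'M[k]_n) :
  [/\ map_mx (coefp 0) (frob_rho A B D) = 1%:M,
      map_mx (coefp 1) (frob_rho A B D) = A,
      map_mx (coefp p) (frob_rho A B D) = B
    & map_mx (coefp (p * p)%N) (frob_rho A B D) = D].
Proof.
have p_gt0 : (0 < p)%N := ltnW p_gt1.
have p_ltpp : (p < p * p)%N by rewrite ltn_Pmulr ?p_gt1.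
have pp_gt1 : (1 < p * p)%N := ltn_trans p_gt1 p_ltpp.
have pp_gt0 : (0 < p * p)%N := ltnW pp_gt1.
split; rewrite coefmx_frob_rho eqxx ?(ltn_eqF p_gt0, gtn_eqF p_gt0, ltn_eqF p_gt1,
  gtn_eqF p_gt1, ltn_eqF pp_gt0, gtn_eqF pp_gt0, ltn_eqF pp_gt1, gtn_eqF pp_gt1,
  ltn_eqF p_ltpp, gtn_eqF p_ltpp) /=.
all: by rewrite !scale0r ?scale1r ?addr0 ?add0r.
Qed.

Lemma map_frob_rho (S : comNzRingType) (f : {rmorphism {poly k} -> S}) n
    (A B D : 'M[k]_n) :
  map_mx f (frob_rho A B D) = 1%:M + f 'X *: map_mx (f \o polyC) A
    + f 'X ^+ p *: map_mx (f \o polyC) B + f 'X ^+ (p * p) *: map_mx (f \o polyC) D.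
Proof.
by apply/matrixP=> i j; rewrite !mxE !rmorphD !rmorphM !rmorphXn /= rmorph_nat.
Qed.

Lemma frob_rho_comodule n (A B D : 'M[k]_n) :
  {in [:: A; B; D] &, forall U V, U *m V = 0} ->
  is_comodule k (GaMod k n (frob_rho A B D)).
Proof.
move=> nil; split=> /=.
  have [<- _ _ _] := frob_rho_coefs A B D.
  by apply: eq_map_mx => q; rewrite horner_coef0.
pose r := 'X + ('X)%:P : {poly {poly k}}.
(* The map defining coassociativity in [is_comodule] is this ring morphism. *)
pose sub_r := (comp_poly r \o map_poly polyC)%FUN.
pose L2 (U : 'M[k]_n) : 'M[{poly {poly k}}]_n := map_mx polyC (map_mx polyC U).
have L2E (f : {rmorphism {poly k} -> {poly {poly k}}}) U :
    (forall c, f c%:P = c%:P%:P) -> map_mx (f \o polyC) U = L2 U.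
  by move=> fC; rewrite /L2 -map_mx_comp; apply: eq_map_mx => c /=; rewrite fC.
rewrite -[map_mx _ _]/(map_mx sub_r _) !map_frob_rho.
rewrite !L2E; last 9 first.
  1-9: by move=> c /=; rewrite ?map_polyC ?comp_polyC.
rewrite /= map_polyX comp_polyX mulmx_unipotent3; last first.
  move=> U V /[!inE] /or3P[] /eqP-> /or3P[] /eqP->;
  by rewrite /L2 -!map_mxM nil ?inE ?eqxx ?orbT // !map_mx0.
have pchar_p : [pchar {poly {poly k}}].-nat p.
  by rewrite pnatE ?(pcharf_prime p_char) // !(pchar_poly _ p).
by rewrite /r (addrC ('X : {poly {poly k}})) !exprDn_pchar ?pnatM ?pchar_p.
Qed.

Lemma frob_rho_homP n m (A B D : 'M[k]_n) (A' B' D' : 'M[k]_m) (f : 'M[k]_(n, m)) :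
  frob_rho A B D *m map_mx polyC f = map_mx polyC f *m frob_rho A' B' D' <->
  [/\ A *m f = f *m A', B *m f = f *m B' & D *m f = f *m D'].
Proof.
split=> [homf | [fA fB fD]]; last first.
  rewrite /frob_rho !mulmxDl !mulmxDr -!scalemxAl -!scalemxAr -!map_mxM.
  by rewrite fA fB fD mul1mx mulmx1.
have coef_homf c : map_mx (coefp c) (frob_rho A B D) *m f
                   = f *m map_mx (coefp c) (frob_rho A' B' D').
  by rewrite -map_coefp_mulmxC -map_coefp_mulCmx homf.
have [_ a1 ap app] := frob_rho_coefs A B D.
have [_ b1 bp bpp] := frob_rho_coefs A' B' D'.
by split; [rewrite -a1 -b1 | rewrite -ap -bp | rewrite -app -bpp].
Qed.

End FrobeniusComodule.

Section BlockMatrices.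
Variable R : pzRingType.

Definition nil_block m (U : 'M[R]_m) : 'M[R]_(m + m) := block_mx 0 U 0 0.

Definition diag2_mx m n (f : 'M[R]_(m, n)) : 'M[R]_(m + m, n + n) :=
  block_mx f 0 0 f.

Lemma nil_blockM m (U V : 'M[R]_m) : nil_block U *m nil_block V = 0.
Proof. by rewrite mulmx_block !mulmx0 !mul0mx !addr0 block_mx0. Qed.

Lemma mulmx_upper2 m n l (P Q : 'M[R]_(m, n)) (P' Q' : 'M[R]_(n, l)) :
  block_mx P Q 0 P *m block_mx P' Q' 0 P'
  = block_mx (P *m P') (P *m Q' + Q *m P') 0 (P *m P').
Proof. by rewrite mulmx_block !mulmx0 !mul0mx !addr0 add0r. Qed.

Lemma nil_block_upper2_commute m n (U : 'M[R]_m) (U' : 'M[R]_n) (P Q : 'M[R]_(m, n)) :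
  nil_block U *m block_mx P Q 0 P = block_mx P Q 0 P *m nil_block U'
  <-> U *m P = P *m U'.
Proof.
rewrite !mulmx_block !mulmx0 !mul0mx !addr0 !add0r.
by split=> [/eq_block_mx[] | ->].
Qed.

Lemma nil_block1_commute m n (f : 'M[R]_(m + m, n + n)) :
  nil_block 1%:M *m f = f *m nil_block 1%:M ->
  f = block_mx (ulsubmx f) (ursubmx f) 0 (ulsubmx f).
Proof.
rewrite -{1 2}[f]submxK !mulmx_block !mulmx0 !mul0mx !mul1mx !mulmx1 !addr0 !add0r.
by case/eq_block_mx=> dl0 dr_ul _ _; rewrite -{1}[f]submxK dl0 dr_ul.
Qed.

Lemma diag2_mx1 m : diag2_mx (1%:M : 'M[R]_m) = 1%:M.
Proof. by rewrite /diag2_mx -scalar_mx_block. Qed.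

Lemma diag2_mxM l m n (f : 'M[R]_(l, m)) (g : 'M[R]_(m, n)) :
  diag2_mx (f *m g) = diag2_mx f *m diag2_mx g.
Proof. by rewrite /diag2_mx mulmx_upper2 mulmx0 mul0mx addr0. Qed.

Lemma diag2_mx_linear m n (a : R) (f g : 'M[R]_(m, n)) :
  diag2_mx (a *: f + g) = a *: diag2_mx f + diag2_mx g.
Proof. by rewrite /diag2_mx scale_block_mx add_block_mx !scaler0 !add0r. Qed.

End BlockMatrices.

Lemma rank_diag2_mx (F : fieldType) m n (f : 'M[F]_(m, n)) :
  \rank (diag2_mx f) = (\rank f + \rank f)%N.
Proof. exact: rank_diag_block_mx. Qed.

Section RepresentationEmbedding.
Variables (k : closedFieldType) (p : nat).
Hypothesis p_char : p \in [pchar k].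

Definition ga_of_kxy (M : kxyMod k) : gaMod k :=
  GaMod k _ (frob_rho p (nil_block 1%:M) (nil_block (kx k M)) (nil_block (ky k M))).

Lemma ga_of_kxy_comodule M : is_comodule k (ga_of_kxy M).
Proof.
apply: frob_rho_comodule => // U V /[!inE] /or3P[] /eqP-> /or3P[] /eqP->;
  exact: nil_blockM.
Qed.

Lemma ga_of_kxy_hom_upper2 M N (f : 'M[k]_(gdim k (ga_of_kxy M), gdim k (ga_of_kxy N))) :
  ga_hom k (ga_of_kxy M) (ga_of_kxy N) f ->
  exists P Q, f = block_mx P Q 0 P /\ kxy_hom k M N P.
Proof.
case/eqP/(frob_rho_homP p_char)=> /nil_block1_commute f_upper2 fx fy.
rewrite f_upper2 in fx fy.
move: fx fy => /nil_block_upper2_commute fx /nil_block_upper2_commute fy.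
by exists (ulsubmx f), (ursubmx f); rewrite /kxy_hom fx fy !eqxx.
Qed.

Lemma ga_of_kxy_hom_diag2 M N (f : 'M[k]_(kdim k M, kdim k N)) :
  kxy_hom k M N f -> ga_hom k (ga_of_kxy M) (ga_of_kxy N) (diag2_mx f).
Proof.
case/andP=> /eqP fx /eqP fy; apply/eqP/(frob_rho_homP p_char).
by split; apply/nil_block_upper2_commute; rewrite // mul1mx mulmx1.
Qed.

Lemma ga_of_kxy_indec M : kxy_indec k M -> ga_indec k (ga_of_kxy M).
Proof.
case=> dim_gt0 idemP; split=> [|e /ga_of_kxy_hom_upper2[P [Q [-> homP]]]].
  by rewrite addn_gt0 dim_gt0.
rewrite mulmx_upper2 => /eq_block_mx[PP PQ _ _].
case: (idemP P homP PP) PQ => ->.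
  by rewrite mul0mx mulmx0 addr0 => <-; left; rewrite block_mx0.
rewrite mul1mx mulmx1 -{3}[Q]add0r => /addIr ->.
by right; rewrite -scalar_mx_block.
Qed.

Lemma ga_of_kxy_iso M N : ga_iso k (ga_of_kxy M) (ga_of_kxy N) -> kxy_iso k M N.
Proof.
case=> f [g [/ga_of_kxy_hom_upper2[P [Q [-> homP]]]]].
case/ga_of_kxy_hom_upper2=> P' [Q' [-> homP']] PP' P'P.
exists P, P'; split=> //.
  by move: PP'; rewrite mulmx_upper2 (scalar_mx_block (kdim k M)) => /eq_block_mx[].
by move: P'P; rewrite mulmx_upper2 (scalar_mx_block (kdim k N)) => /eq_block_mx[].
Qed.

Lemma short_exact_diag2 l m n (f : 'M[k]_(l, m)) (g : 'M[k]_(m, n)) :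
  short_exact k l m n f g -> short_exact k _ _ _ (diag2_mx f) (diag2_mx g).
Proof.
case/and4P=> free_f full_g /eqP fg0 /eqP rank_fg.
apply/and4P; split.
- by rewrite /row_free rank_diag2_mx (eqP free_f).
- by rewrite /row_full rank_diag2_mx (eqP full_g).
- by rewrite -diag2_mxM fg0 /diag2_mx block_mx0.
- by rewrite !rank_diag2_mx addnACA rank_fg.
Qed.

Definition ga_rep_embedding : rep_embedding k :=
  @RepEmbedding k ga_of_kxy (fun M N f => diag2_mx f)
    ga_of_kxy_comodule ga_of_kxy_hom_diag2 (fun M => diag2_mx1 _ _)
    (fun L M N f g _ _ => diag2_mxM f g) (fun M N a f g _ _ => diag2_mx_linear a f g)
    (fun L M N f g _ _ => @short_exact_diag2 _ _ _ f g) ga_of_kxy_indec ga_of_kxy_iso.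

End RepresentationEmbedding.

Theorem corollary3p3 (k : closedFieldType) (p : nat) (hp : p \in [pchar k]%R) :
  Ga_modules_wild k.
Proof. exact: inhabits (ga_rep_embedding hp). Qed.
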